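(* Let $\mathbb{F}$ be an infinite field with $\operatorname{char}(\mathbb{F})\neq 2$, let $G$ be a group with a group involution $\ast$ and a non-trivial orientation $\sigma$ such that $gg^\ast\in N=\ker\sigma$ for all $g\in G$, and let $\circledast$ be the associated oriented involution of $\mathbb{F}G$. Assume $\mathbb{F}G$ is normal with respect to $\circledast$, and let $g,h\in G$ with $gh\neq hg$. (1) If either $\sigma(g)=\sigma(h)=1$, or $\sigma(g)=-1$ and $\sigma(h)=1$, then $g^2h=hg^2$. (2) If either $\sigma(g)=1$ and $\sigma(h)=-1$, or $\sigma(g)=\sigma(h)=-1$, then $g^2h=(g^2h)^\ast$. In particular, $(m^2,n)=1$ for all $m,n\in N$.
   Context: A group involution on $G$ is a map $\ast:G\to G$ with $(gh)^\ast=h^\ast g^\ast$ and $(g^\ast)^\ast=g$. An orientation is a group homomorphism $\sigma:G\to\{\pm1\}$. The oriented involution is $(\sum_g\alpha_g g)^\circledast=\sum_g\alpha_g\sigma(g)g^\ast$ on $\mathbb{F}G$. $\mathbb{F}G$ is normal if $\alpha\alpha^\circledast=\alpha^\circledast\alpha$ for all $\alpha\in\mathbb{F}G$. $(x,y)=x^{-1}y^{-1}xy$. *)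

(* The group ring FG is represented
   by finite formal sums (lists of (coefficient, group element)); two formal
   sums denote the same element of FG iff they have the same coefficient
   function [fg_coef]. *)
From HB Require Import structures.
From mathcomp Require Import all_boot all_order all_algebra.
Set Implicit Arguments. Unset Strict Implicit. Unset Printing Implicit Defensive.
Import GRing.Theory.

Section GroupRing.
Variables (F : fieldType) (G : groupType).

Definition group_involution (star : G -> G) : Prop :=
  (forall g h : G, star (g * h)%g = (star h * star g)%g) /\ involutive star.

Definition orientation (sigma : G -> int) : Prop :=
  (forall g : G, sigma g = 1%R \/ sigma g = (-1)%R) /\
  (forall g h : G, sigma (g * h)%g = (sigma g * sigma h)%R).

Definition fg := seq (F * G).

Definition fg_coef (a : fg) (x : G) : F :=
  (\sum_(p <- a | p.2 == x) p.1)%R.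

Definition fg_mul (a b : fg) : fg :=
  [seq ((p.1 * q.1)%R, (p.2 * q.2)%g) | p <- a, q <- b].

Definition fg_oinv (star : G -> G) (sigma : G -> int) (a : fg) : fg :=
  [seq ((p.1 * (sigma p.2)%:~R)%R, star p.2) | p <- a].

Definition fg_normal (star : G -> G) (sigma : G -> int) : Prop :=
  forall a : fg,
    fg_coef (fg_mul a (fg_oinv star sigma a)) =1
    fg_coef (fg_mul (fg_oinv star sigma a) a).

End GroupRing.

(* Normality applied to a single group element g gives g g^* = g^* g.  Applied to
   x + y^*, it yields, after cancelling the terms x x^* and y y^*,
   sigma(y) xy + sigma(x) (xy)^* = sigma(x) (yx)^* + sigma(y) yx,
   and comparing coefficients of xy when xy <> yx shows, since char F <> 2, that
   xy = (yx)^* if sigma(x) = sigma(y) and xy = (xy)^* otherwise.  The claims follow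
   by applying these two rules to the pairs (g, h), (g, hg), (gh, g) and (g, gh)
   and cancelling in G. *)

From HB Require Import structures.
From mathcomp Require Import all_boot all_order all_algebra.
Import GRing.Theory.
Set Implicit Arguments. Unset Strict Implicit. Unset Printing Implicit Defensive.
Local Open Scope ring_scope.
Local Open Scope group_scope.

Lemma fg_coef_nil (F : fieldType) (G : groupType) (x : G) :
  fg_coef ([::] : fg F G) x = 0%R.
Proof. exact: big_nil. Qed.

Lemma fg_coef_cons (F : fieldType) (G : groupType) (a : F) (g : G) (s : fg F G) x :
  fg_coef ((a, g) :: s) x = ((g == x)%:R * a + fg_coef s x)%R.
Proof. by rewrite /fg_coef big_cons /=; case: eqP; rewrite ?mul1r ?mul0r ?add0r. Qed.

Lemma natr_bool_eq_add1 (F : fieldType) (b c : bool) :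
  (2 \notin [pchar F])%N -> c%:R = 1 + b%:R :> F -> c.
Proof.
move=> pchar2; case: b; case: c => //= /eqP; rewrite eq_sym ?addr0 ?oner_eq0 //.
by move: pchar2; rewrite inE /= => /negbTE ->.
Qed.

Lemma noncommuting_mull (G : groupType) (x y : G) :
  x * y != y * x -> x * (x * y) != x * y * x.
Proof. by apply: contra => /eqP xxy; apply/eqP/(mulgI x); rewrite xxy mulgA. Qed.

Lemma noncommuting_mulr (G : groupType) (x y : G) :
  x * y != y * x -> x * (y * x) != y * x * x.
Proof. by apply: contra => /eqP xyx; apply/eqP/(mulIg x); rewrite -xyx mulgA. Qed.

Section NormalGroupRing.

Variables (F : fieldType) (G : groupType) (star : G -> G) (sigma : G -> int).
Hypothesis pchar2 : (2 \notin [pchar F])%N.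
Hypotheses (star_mul : forall g h : G, star (g * h) = star h * star g) (starK : involutive star).
Hypotheses (sigma_pm1 : forall g : G, sigma g = 1%R \/ sigma g = (-1)%R)
           (sigmaM : forall g h : G, sigma (g * h) = (sigma g * sigma h)%R).
Hypothesis sigma_mul_star : forall g : G, sigma (g * star g) = 1%R.
Hypothesis normalFG : fg_normal F star sigma.

Lemma sigma_sqr (g : G) : (sigma g * sigma g = 1)%R.
Proof. by case: (sigma_pm1 g) => ->. Qed.

Lemma sigma_star (g : G) : sigma (star g) = sigma g.
Proof.
have := sigma_mul_star g; rewrite sigmaM.
by case: (sigma_pm1 g) => ->; case: (sigma_pm1 (star g)) => ->.
Qed.

Lemma sigmaF_neq0 (g : G) : ((sigma g)%:~R != 0 :> F)%R.
Proof. by case: (sigma_pm1 g) => ->; rewrite ?oppr_eq0 oner_eq0. Qed.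

Lemma mul_star_comm (g : G) : g * star g = star g * g.
Proof.
have := normalFG [:: (1%R, g)] (g * star g).
rewrite /fg_mul /fg_oinv /= !fg_coef_cons fg_coef_nil eqxx !mul1r !addr0.
by case: eqP => // _; rewrite mul0r => /eqP; rewrite (negbTE (sigmaF_neq0 g)).
Qed.

Lemma normal_coef_eq (x y : G) : x * y != y * x ->
  (sigma x * sigma y)%R%:~R + (star (x * y) == x * y)%:R
     = (star (y * x) == x * y)%:R :> F.
Proof.
move=> nxy.
have := normalFG [:: (1%R, x); (1%R, star y)] (x * y).
rewrite /fg_mul /fg_oinv /= !fg_coef_cons fg_coef_nil !starK sigma_star.
rewrite -!star_mul mul_star_comm (mul_star_comm y) eqxx [y * x == _]eq_sym (negbTE nxy).
rewrite !(mul1r, mulr1, mul0r, addr0, add0r) => /addrI; rewrite addrA => /addIr.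
have sx2 : ((sigma x)%:~R * (sigma x)%:~R = 1 :> F)%R by rewrite -intrM sigma_sqr.
move/(congr1 (fun z => z * (sigma x)%:~R)%R).
by rewrite mulrDl -!mulrA sx2 !mulr1 mulrC -intrM.
Qed.

Lemma star_mulC_same_sign (x y : G) :
  x * y != y * x -> sigma x = sigma y -> star (y * x) = x * y.
Proof.
move=> nxy sxy; apply/eqP; apply: (natr_bool_eq_add1 pchar2).
by rewrite -(normal_coef_eq nxy) sxy sigma_sqr.
Qed.

Lemma star_mul_opposite_sign (x y : G) :
  x * y != y * x -> sigma x = (- sigma y)%R -> star (x * y) = x * y.
Proof.
move=> nxy sxy; apply/eqP.
apply: (natr_bool_eq_add1 (b := star (y * x) == x * y) pchar2).
by rewrite -(normal_coef_eq nxy) sxy mulNr sigma_sqr addrA addrN add0r.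
Qed.

Lemma sqr_commute_sign_pos_pos (g h : G) :
  g * h != h * g -> sigma g = 1%R -> sigma h = 1%R -> g ^+ 2 * h = h * g ^+ 2.
Proof.
move=> ngh sg sh.
have star_hg : star (h * g) = g * h by apply: star_mulC_same_sign; rewrite ?sg ?sh.
have star_gh : star (g * h) = h * g by rewrite -star_hg starK.
have hg_conj : h * g = star g * h.
  apply: (mulgI g); rewrite -(star_mulC_same_sign (noncommuting_mulr ngh)).
    by rewrite star_mul star_hg mulgA -mul_star_comm -mulgA.
  by rewrite sigmaM sg sh.
have gh_conj : g * h = h * star g.
  apply: (mulIg g); rewrite -(star_mulC_same_sign _).
    by rewrite star_mul star_gh -!mulgA mul_star_comm.
  - by rewrite eq_sym noncommuting_mull.
  - by rewrite sigmaM sg sh.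
(* Both sides reduce to g^* h g. *)
rewrite expg2 -!mulgA gh_conj mulgA -star_hg star_mul -mulgA -star_mul star_gh.
by rewrite !mulgA hg_conj.
Qed.

Lemma sqr_commute_sign_neg_pos (g h : G) :
  g * h != h * g -> sigma g = (-1)%R -> sigma h = 1%R -> g ^+ 2 * h = h * g ^+ 2.
Proof.
move=> ngh sg sh.
have star_gh : star (g * h) = g * h.
  by apply: star_mul_opposite_sign ngh _; rewrite sg sh.
have star_hg : star (h * g) = h * g.
  by apply: star_mul_opposite_sign; rewrite 1?eq_sym // sg sh opprK.
have g_fixed : star g = g.
  apply: (mulIg (g * h)); rewrite -{1}star_gh -star_mul.
  by apply: star_mulC_same_sign (noncommuting_mull ngh) _; rewrite sigmaM sg sh mulr1.
by rewrite expg2 -mulgA -{1}star_gh [RHS]mulgA -star_hg !star_mul g_fixed !mulgA.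
Qed.

Lemma sqr_mul_star_fixed (g h : G) :
  g * h != h * g -> sigma h = (-1)%R -> star (g ^+ 2 * h) = g ^+ 2 * h.
Proof.
move=> ngh sh; rewrite expg2 -mulgA.
by apply: star_mul_opposite_sign (noncommuting_mull ngh) _; rewrite sigmaM sh mulrN1 opprK.
Qed.

End NormalGroupRing.

Theorem lemma7 (F : fieldType) (G : groupType) (star : G -> G) (sigma : G -> int) :
  (* F infinite *)
  (forall s : seq F, exists x : F, x \notin s) ->
  (* char F <> 2 *)
  (2%N \notin [pchar F]%R) ->
  group_involution star ->
  orientation sigma ->
  (* sigma non-trivial *)
  (exists g : G, sigma g = (-1)%R) ->
  (* g g^* \in N = ker sigma *)
  (forall g : G, sigma (g * star g)%g = 1%R) ->
  fg_normal F star sigma ->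
  (forall g h : G, (g * h != h * g)%g ->
     (sigma g = 1%R /\ sigma h = 1%R) \/ (sigma g = (-1)%R /\ sigma h = 1%R) ->
     (g ^+ 2 * h = h * g ^+ 2)%g) /\
  (forall g h : G, (g * h != h * g)%g ->
     (sigma g = 1%R /\ sigma h = (-1)%R) \/ (sigma g = (-1)%R /\ sigma h = (-1)%R) ->
     (g ^+ 2 * h = star (g ^+ 2 * h))%g) /\
  (forall m n : G, sigma m = 1%R -> sigma n = 1%R -> [~ m ^+ 2, n]%g = 1%g).
Proof.
move=> _ pchar2 [star_mul starK] [sigma_pm1 sigmaM] _ sigma_mul_star normalFG.
have pos_pos := sqr_commute_sign_pos_pos pchar2 star_mul starK sigma_pm1 sigmaM
  sigma_mul_star normalFG.
have neg_pos := sqr_commute_sign_neg_pos pchar2 star_mul starK sigma_pm1 sigmaM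
  sigma_mul_star normalFG.
have star_fixed := sqr_mul_star_fixed pchar2 star_mul starK sigma_pm1 sigmaM
  sigma_mul_star normalFG.
split; last split.
- by move=> g h ngh [[sg sh] | [sg sh]]; [exact: pos_pos | exact: neg_pos].
- by move=> g h ngh [[_ sh] | [_ sh]]; rewrite star_fixed.
- move=> m n sm sn; apply/eqP/commgP.
  have [mn | nmn] := eqVneq (m * n) (n * m); last exact: pos_pos.
  exact/commute_sym/commuteX/esym.
Qed.
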